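(* Let $(\lambda_k)_{k\ge1}$, $(\mu_k)_{k\ge1}$ be nonzero real numbers with $|\lambda_1|>|\mu_1|>|\lambda_2|>|\mu_2|>\dots>0$ and $\lambda_k\to0$, let $\sigma=\{\lambda_k^2:k\ge1\}\cup\{0\}$, and let $\Phi(z)=\prod_{k\ge1}\frac{z-\mu_k^2}{z-\lambda_k^2}$ for $z\in\mathbb{C}\setminus\sigma$. Then for all $z\in\mathbb{C}\setminus\sigma$ $$\Phi(z)=1-\sum_{n\ge1}\frac{a_n}{\lambda_n^2-z},\qquad\text{where}\quad a_n=(\lambda_n^2-\mu_n^2)\prod_{k\ne n}\frac{\lambda_n^2-\mu_k^2}{\lambda_n^2-\lambda_k^2},$$ with the series converging uniformly on compact subsets of $\mathbb{C}\setminus\sigma$. *)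

From HB Require Import structures.
From mathcomp Require Import all_boot all_order all_algebra.
From mathcomp Require Import all_classical all_reals all_analysis.
From mathcomp Require Import complex.
Set Implicit Arguments. Unset Strict Implicit. Unset Printing Implicit Defensive.
Import Order.TTheory GRing.Theory Num.Theory.
Import numFieldTopology.Exports numFieldNormedType.Exports.
Local Open Scope ring_scope.

HB.instance Definition _ (R : rcfType) :=
  PseudoPointedMetric.copy R[i] (R[i])^o.
Local Open Scope complex_scope.
Local Open Scope classical_set_scope.

Definition sigma_set (R : realType) (lam : nat -> R) : set R[i] :=
  [set z | z = 0 \/ exists k, z = ((lam k) ^+ 2)%:C].

Definition Phi_partial (R : realType) (lam mu : nat -> R) (z : R[i]) (N : nat) : R[i] :=
  \prod_(k < N) ((z - ((mu k) ^+ 2)%:C) / (z - ((lam k) ^+ 2)%:C)).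

Definition Phi (R : realType) (lam mu : nat -> R) (z : R[i]) : R[i] :=
  lim (Phi_partial lam mu z @ \oo).

Definition a_partial (R : realType) (lam mu : nat -> R) (n N : nat) : R :=
  ((lam n) ^+ 2 - (mu n) ^+ 2) *
  \prod_(k < N | k != n :> nat)
     (((lam n) ^+ 2 - (mu k) ^+ 2) / ((lam n) ^+ 2 - (lam k) ^+ 2)).

Definition a_coef (R : realType) (lam mu : nat -> R) (n : nat) : R :=
  lim (a_partial lam mu n @ \oo).

Definition S_partial (R : realType) (lam mu : nat -> R) (z : R[i]) (N : nat) : R[i] :=
  \sum_(n < N) ((a_coef lam mu n)%:C / (((lam n) ^+ 2)%:C - z)).

(* Write al_k = lam_k^2 and be_k = mu_k^2, so that al_0 > be_0 > al_1 > be_1 > ... > 0.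
   Partial fractions give, for the N-th partial product,
     prod_(k < N) (z - be_k) / (z - al_k) = 1 - sum_(n < N) c_N(n) / (al_n - z),
   where c_N(n) is the product defining a_n truncated to k < N. By interlacing,
   every factor of c_N(n) is positive and those with k > n are >= 1, so c_N(n)
   increases with N; at z = 0 the identity bounds sum_(n < N) c_N(n) / al_n by 1.
   Hence c_N(n) increases to a_n and sum_n a_n / al_n <= 1. If |al_n - z| >= d
   for all n, the n-th term of the series is at most (al_0 / d) a_n / al_n, which
   gives convergence with a tail bound uniform in z, while the partial product
   differs from 1 - S_N by at most (al_0 / d) sum_(n < N) (a_n - c_N(n)) / al_n,
   which tends to 0 by Tannery's theorem. Such a d exists uniformly on compact
   subsets of the complement of sigma because lam_k -> 0. *)

From HB Require Import structures.
From mathcomp Require Import all_boot all_order all_algebra.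
From mathcomp Require Import all_classical all_reals all_analysis.
From mathcomp Require Import complex.
From mathcomp Require Import ring lra.
Import Order.TTheory GRing.Theory Num.Theory.
Import numFieldTopology.Exports numFieldNormedType.Exports.
Local Open Scope ring_scope.
Local Open Scope complex_scope.
Local Open Scope classical_set_scope.
Set Implicit Arguments. Unset Strict Implicit. Unset Printing Implicit Defensive.

Section PartialFractions.
Variables (F : fieldType) (al be : nat -> F).

Definition pfrac_coef (n N : nat) : F :=
  (al n - be n) * \prod_(k < N | k != n :> nat) ((al n - be k) / (al n - al k)).

Lemma pfrac_coefS n N : (n < N)%N ->
  pfrac_coef n N.+1 = pfrac_coef n N * ((al n - be N) / (al n - al N)).
Proof.
move=> ltnN; rewrite /pfrac_coef big_mkcond big_ord_recr /= -big_mkcond /=.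
by rewrite (gtn_eqF ltnN) mulrA.
Qed.

Lemma pfrac_coef_last N :
  pfrac_coef N N.+1 = (al N - be N) * \prod_(k < N) ((al N - be k) / (al N - al k)).
Proof.
rewrite /pfrac_coef big_mkcond big_ord_recr /= eqxx mulr1; congr (_ * _).
by apply: eq_bigr => k _; rewrite (ltn_eqF (ltn_ord k)).
Qed.

Lemma prod_pfrac N z : injective al -> (forall k, (k < N)%N -> z != al k) ->
  \prod_(k < N) ((z - be k) / (z - al k)) =
  1 - \sum_(n < N) pfrac_coef n N / (al n - z).
Proof.
move=> al_inj; elim: N z => [|N IHN] z z_al; first by rewrite !big_ord0 subr0.
have al_neq i j : i != j -> al i - al j != 0.
  by rewrite subr_eq0; apply: contraNneq => /al_inj ->.
have z_sub k : (k < N.+1)%N -> z - al k != 0 by move/z_al; rewrite subr_eq0.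
have zN := z_sub N (ltnSn N).
have Nz : al N - z != 0 by rewrite -opprB oppr_eq0.
rewrite big_ord_recr /= IHN => [|k /ltnW/z_al //].
rewrite big_ord_recr /= pfrac_coef_last IHN => [|k ltkN]; last first.
  by rewrite -subr_eq0 al_neq // gtn_eqF.
set T := \sum_(n < N) pfrac_coef n N / (al n - al N).
have -> : \sum_(n < N) pfrac_coef n N.+1 / (al n - z) =
    (\sum_(n < N) pfrac_coef n N / (al n - z)) * ((z - be N) / (z - al N))
    + T * ((al N - be N) / (al N - z)).
  rewrite /T !mulr_suml -big_split /=; apply: eq_bigr => n _.
  have nz : al n - z != 0 by rewrite -opprB oppr_eq0 z_sub // ltnS ltnW.
  have nN : al n - al N != 0 by rewrite al_neq // ltn_eqF.
  by rewrite pfrac_coefS //; field; rewrite Nz nN zN nz.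
by field; rewrite zN Nz.
Qed.

End PartialFractions.

Lemma pfrac_coef_map (F K : fieldType) (f : {rmorphism F -> K}) (al be : nat -> F) n N :
  pfrac_coef (fun k => f (al k)) (fun k => f (be k)) n N = f (pfrac_coef al be n N).
Proof.
rewrite /pfrac_coef rmorphM rmorphB rmorph_prod; congr (_ * _).
by apply: eq_bigr => k _; rewrite fmorph_div !rmorphB.
Qed.

Lemma sum_ord_cat (V : zmodType) (f : nat -> V) M N : (M <= N)%N ->
  \sum_(n < N) f n = \sum_(n < M) f n + \sum_(M <= n < N) f n.
Proof. by move=> leMN; rewrite -!(big_mkord xpredT) (big_cat_nat (leq0n M) leMN). Qed.

Lemma cvg_sum (K : numFieldType) (V : normedModType K) M
    (f : nat -> nat -> V) (l : nat -> V) :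
  (forall n, f n @ \oo --> l n) ->
  (fun N => \sum_(n < M) f n N) @ \oo --> \sum_(n < M) l n.
Proof.
by move=> f_cvg; apply: (@cvg_big V _ +%R 0 xpredT add_continuous) => // n _.
Qed.

Lemma tannery_cvg0 (R : realType) (g : nat -> nat -> R) (M : nat -> R) :
  (forall N n, (n < N)%N -> 0 <= g N n <= M n) ->
  (forall n, g ^~ n @ \oo --> 0) -> cvgn (series M) ->
  (fun N => \sum_(n < N) g N n) @ \oo --> 0.
Proof.
move=> g_bnd g_cvg M_cvg; apply/cvgrPdist_lt => e e_gt0.
have M_ge0 n : 0 <= M n by have /andP[/le_trans] := g_bnd n.+1 n (ltnSn n); apply.
have M_le := nondecreasing_cvgn_le
  (@nondecreasing_series _ M xpredT 0 (fun n _ _ => M_ge0 n)) M_cvg.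
have e2_gt0 : 0 < e / 2 by rewrite divr_gt0.
have [N0 _ /(_ N0 (leqnn N0)) /= tail_small] := (cvgrPdist_lt _ _).1 M_cvg _ e2_gt0.
have head_cvg : (fun N => \sum_(n < N0) g N n) @ \oo --> 0.
  by have := @cvg_sum _ R N0 (fun n N => g N n) (fun=> 0) g_cvg; rewrite big1_eq.
near=> N.
have N0N : (N0 <= N)%N by near: N; exists N0.
rewrite sub0r normrN ger0_norm; last first.
  by apply: sumr_ge0 => n _; case/andP: (g_bnd N n (ltn_ord n)).
rewrite (sum_ord_cat _ N0N) (splitr e) ltr_leD //.
  near: N; apply: filterS ((cvgrPdist_lt _ _).1 head_cvg _ e2_gt0) => N.
  by rewrite sub0r normrN; apply: le_lt_trans (ler_norm _).
apply: le_trans (ltW tail_small); rewrite (le_trans _ (ler_norm _)) //.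
apply: (@le_trans _ _ (\sum_(N0 <= n < N) M n)).
  by apply: ler_sum_nat => n /andP[_ /g_bnd/andP[]].
by rewrite -(sub_series_geq _ N0N) lerD2r M_le.
Unshelve. all: by end_near. Qed.

Local Notation normc := ComplexField.Normc.normc.

Section ComplexNorm.
Variable R : realType.
Implicit Types (x : R[i]) (u : nat -> R[i]).

Lemma normr_normc x : `|x| = (normc x)%:C.
Proof. by case: x. Qed.

Lemma normc_ge0 x : 0 <= normc x.
Proof. by case: x => a b; rewrite sqrtr_ge0. Qed.

Lemma normc_gt0 x : x != 0 -> 0 < normc x.
Proof.
move=> x_neq0; rewrite lt_def normc_ge0 andbT.
by apply: contraNneq x_neq0 => /ComplexField.Normc.eq0_normc ->.
Qed.

Lemma normc_real (r : R) : normc r%:C = `|r|.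
Proof. by rewrite /= expr0n /= addr0 sqrtr_sqr. Qed.

Lemma normc_sum (I : Type) (r : seq I) (P : pred I) (f : I -> R[i]) :
  normc (\sum_(i <- r | P i) f i) <= \sum_(i <- r | P i) normc (f i).
Proof.
apply: (big_ind2 (fun x y => normc x <= y)) => [|x1 x2 y1 y2 le1 le2|//].
  by rewrite ComplexField.Normc.normc0.
exact: le_trans (le_normcD _ _) (lerD le1 le2).
Qed.

Lemma normc_le_Re_Im x : normc x <= `|complex.Re x| + `|complex.Im x|.
Proof.
case: x => a b /=; rewrite -[leRHS]ger0_norm ?addr_ge0 // -sqrtr_sqr ler_wsqrtr //.
rewrite -(real_normK (num_real a)) -(real_normK (num_real b)) sqrrD addrAC lerDl.
by rewrite mulrn_wge0 ?mulr_ge0.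
Qed.

Lemma Re_le_normc x : `|complex.Re x| <= normc x.
Proof. by rewrite -lecR -normr_normc normc_ge_Re. Qed.

Lemma Im_le_normc x : `|complex.Im x| <= normc x.
Proof.
by case: x => a b /=; rewrite -sqrtr_sqr ler_wsqrtr // lerDr sqr_ge0.
Qed.

Lemma cvgC_normcP u l : u @ \oo --> l <->
  forall e, 0 < e -> \forall N \near \oo, normc (l - u N) < e.
Proof.
split=> [u_cvg e e_gt0 | u_near]; last first.
  apply/cvg_ballP => -[a b]; rewrite ltcE /= => /andP[/eqP-> a_gt0].
  by apply: filterS (u_near a a_gt0) => N; rewrite /ball /= normr_normc ltcR.
have /(_ _ e%:C) := (@cvgrPdist_lt _ (R[i]^o) _ \oo _ u l).1 u_cvg.
rewrite ltcR => /(_ e_gt0); apply: filterS => N; by rewrite normr_normc ltcR.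
Qed.

Lemma cvgn_real_cauchy (v : nat -> R) :
  (forall e, 0 < e -> \forall m & n \near \oo, `|v m - v n| < e) -> cvgn v.
Proof.
by move=> v_cauchy; apply/cauchy_cvgP/cauchy_ballP => e /v_cauchy; rewrite near_map2.
Qed.

Lemma cvgC_cauchy u :
  (forall e, 0 < e -> \forall m & n \near \oo, normc (u m - u n) < e) -> cvgn u.
Proof.
move=> u_cauchy.
have Re_cvg : cvgn (fun n => complex.Re (u n)).
  apply: cvgn_real_cauchy => e /u_cauchy; apply: filterS => -[m n] /=.
  by rewrite -raddfB; apply: le_lt_trans (Re_le_normc _).
have Im_cvg : cvgn (fun n => complex.Im (u n)).
  apply: cvgn_real_cauchy => e /u_cauchy; apply: filterS => -[m n] /=.
  by rewrite -raddfB; apply: le_lt_trans (Im_le_normc _).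
apply/cvg_ex.
exists (limn (fun n => complex.Re (u n)) +i* limn (fun n => complex.Im (u n))).
apply/cvgC_normcP => e e_gt0; have e2_gt0 : 0 < e / 2 by rewrite divr_gt0.
near=> N; apply: le_lt_trans (normc_le_Re_Im _) _; rewrite (splitr e) ltrD //=.
  by rewrite raddfB /=; near: N; apply: (cvgrPdist_lt _ _).1 Re_cvg _ e2_gt0.
by rewrite raddfB /=; near: N; apply: (cvgrPdist_lt _ _).1 Im_cvg _ e2_gt0.
Unshelve. all: by end_near. Qed.

End ComplexNorm.

Section Interlacing.
Variables (R : realType) (al be : nat -> R).
Hypotheses (be_gt0 : forall k, 0 < be k) (be_lt_al : forall k, be k < al k)
  (al_lt_be : forall k, al k.+1 < be k).

Lemma al_lt_be_ltn i j : (i < j)%N -> al j < be i.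
Proof.
elim: j => // j IHj; rewrite ltnS leq_eqVlt => /orP[/eqP-> //|].
by move/IHj/(lt_trans (be_lt_al j))/(lt_trans (al_lt_be j)).
Qed.

Lemma al_ltn i j : (i < j)%N -> al j < al i.
Proof. by move/al_lt_be_ltn/lt_trans; apply. Qed.

Lemma al_gt0 k : 0 < al k.
Proof. exact: lt_trans (be_gt0 k) (be_lt_al k). Qed.

Lemma al_le0 k : al k <= al 0.
Proof. by case: k => // k; apply/ltW/al_ltn. Qed.

Lemma al_inj : injective al.
Proof.
move=> i j eq_al; case: (ltngtP i j) => // /al_ltn; by rewrite eq_al ltxx.
Qed.

Lemma pfrac_factor_gt0 n k : k != n -> 0 < (al n - be k) / (al n - al k).
Proof.
rewrite neq_ltn => /orP[ltkn | ltnk].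
  rewrite -mulrNN -invrN !opprB divr_gt0 // subr_gt0 ?al_lt_be_ltn ?al_ltn //.
rewrite divr_gt0 // subr_gt0 ?al_ltn //.
exact: lt_trans (be_lt_al k) (al_ltn ltnk).
Qed.

Lemma pfrac_factor_ge1 n k : (n < k)%N -> 1 <= (al n - be k) / (al n - al k).
Proof.
move=> ltnk; rewrite ler_pdivlMr ?subr_gt0 ?al_ltn // mul1r.
by rewrite lerD2l lerN2 ltW.
Qed.

Lemma pfrac_coef_gt0 n N : 0 < pfrac_coef al be n N.
Proof.
rewrite mulr_gt0 ?subr_gt0 //.
by apply: prodr_gt0 => k; apply: pfrac_factor_gt0.
Qed.

Lemma pfrac_coef_homo n N M : (n < N)%N -> (N <= M)%N ->
  pfrac_coef al be n N <= pfrac_coef al be n M.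
Proof.
move=> ltnN /subnK <-; elim: (M - N)%N => // m IHm.
rewrite addSn pfrac_coefS ?ltn_addl //.
rewrite (le_trans IHm) // ler_peMr ?pfrac_factor_ge1 ?ltn_addl //.
exact/ltW/pfrac_coef_gt0.
Qed.

Lemma sum_pfrac_coef_le1 N : \sum_(n < N) pfrac_coef al be n N / al n <= 1.
Proof.
have := @prod_pfrac _ al be N 0 al_inj (fun k _ => negbT (lt_eqF (al_gt0 k))).
under [X in X <= 1]eq_bigr => n _ do rewrite -[al n]subr0.
move/esym/(canRL (subKr 1)) ->; rewrite lerBlDr lerDl; apply: prodr_ge0 => k _.
by rewrite !sub0r invrN mulrNN divr_ge0 // ltW ?al_gt0.
Qed.

Lemma pfrac_coef_le n N : (n < N)%N -> pfrac_coef al be n N <= al n.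
Proof.
move=> ltnN; rewrite -[leRHS]mul1r -ler_pdivrMr ?al_gt0 //.
apply: le_trans (sum_pfrac_coef_le1 N); rewrite (bigD1 (Ordinal ltnN)) //= lerDl.
by apply: sumr_ge0 => k _; rewrite divr_ge0 // ltW ?pfrac_coef_gt0 ?al_gt0.
Qed.

Lemma cvg_pfrac_coef n : cvgn (pfrac_coef al be n).
Proof.
apply: (@near_nondecreasing_is_cvgn _ _ (al n)).
  by exists n.+1 => // N /= /pfrac_coef_homo.
by exists n.+1 => // N /= /pfrac_coef_le.
Qed.

Definition acoef n := limn (pfrac_coef al be n).

Lemma pfrac_coef_le_acoef n N : (n < N)%N -> pfrac_coef al be n N <= acoef n.
Proof.
move=> ltnN; apply: limr_ge; first exact: cvg_pfrac_coef.
by exists N => // M /= /(pfrac_coef_homo ltnN).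
Qed.

Lemma acoef_gt0 n : 0 < acoef n.
Proof. exact: lt_le_trans (pfrac_coef_gt0 n n.+1) (pfrac_coef_le_acoef (ltnSn n)). Qed.

Lemma cvg_series_acoef : cvgn (series (fun n => acoef n / al n)).
Proof.
apply: nondecreasing_is_cvgn.
  by apply: nondecreasing_series => n _ _; rewrite divr_ge0 // ltW ?acoef_gt0 ?al_gt0.
exists 1 => _ [M _ <-]; rewrite /series /= big_mkord.
have sum_cvg : (fun N => \sum_(n < M) pfrac_coef al be n N / al n) @ \oo -->
    \sum_(n < M) acoef n / al n.
  apply: (@cvg_sum _ R M (fun n N => pfrac_coef al be n N / al n)
    (fun n => acoef n / al n)) => n.
  by apply: cvgMr_tmp; exact: cvg_pfrac_coef.
rewrite -(cvg_lim _ sum_cvg) //; apply: limr_le; first exact: cvgP sum_cvg.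
exists M => // N /= leMN; apply: le_trans (sum_pfrac_coef_le1 N).
rewrite (sum_ord_cat (fun n => pfrac_coef al be n N / al n) leMN) lerDl.
by apply: sumr_ge0 => n _; rewrite divr_ge0 // ltW ?pfrac_coef_gt0 ?al_gt0.
Qed.


Lemma series_acoef_le_lim M :
  series (fun n => acoef n / al n) M <= limn (series (fun n => acoef n / al n)).
Proof.
apply: nondecreasing_cvgn_le; last exact: cvg_series_acoef.
by apply: nondecreasing_series => n _ _; rewrite divr_ge0 // ltW ?acoef_gt0 ?al_gt0.
Qed.

Lemma pfrac_defect_cvg0 :
  (fun N => \sum_(n < N) (acoef n - pfrac_coef al be n N) / al n) @ \oo --> 0.
Proof.
apply: (@tannery_cvg0 R (fun N n => (acoef n - pfrac_coef al be n N) / al n)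
  (fun n => acoef n / al n)); last exact: cvg_series_acoef.
  move=> N n ltnN; have al_inv_ge0 : 0 <= (al n)^-1 by rewrite invr_ge0 ltW ?al_gt0.
  rewrite mulr_ge0 ?subr_ge0 ?pfrac_coef_le_acoef //=.
  by rewrite ler_wpM2r // gerBl ltW ?pfrac_coef_gt0.
move=> n.
have := cvgMr_tmp (b := (al n)^-1) (cvgB (cvg_cst (acoef n)) (@cvg_pfrac_coef n)).
by rewrite subrr mul0r; apply.
Qed.

Definition pfrac_sum (z : R[i]) N := \sum_(n < N) (acoef n)%:C / ((al n)%:C - z).

Section AwayFromSpectrum.
Variables (z : R[i]) (d : R).
Hypotheses (d_gt0 : 0 < d) (dist_ge : forall n, d <= normc ((al n)%:C - z)).

Let c := al 0 / d.
Let c_gt0 : 0 < c. Proof. by rewrite divr_gt0 ?al_gt0. Qed.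
Let b n := acoef n / al n.

Lemma normc_pfrac_term_le n x : 0 <= x ->
  normc (x%:C / ((al n)%:C - z)) <= c * (x / al n).
Proof.
move=> x_ge0; have dist_gt0 := lt_le_trans d_gt0 (dist_ge n).
rewrite ComplexField.Normc.normcM ComplexField.Normc.normcV normc_real ger0_norm //.
rewrite mulrCA ler_wpM2l // /c mulrAC ler_pdivlMr ?al_gt0 //.
apply: (@le_trans _ _ 1); first by rewrite mulrC ler_pdivrMr // mul1r.
by rewrite ler_pdivlMr ?al_gt0 // mul1r al_le0.
Qed.

Lemma normc_pfrac_sumB N M : (N <= M)%N ->
  normc (pfrac_sum z M - pfrac_sum z N) <= c * (series b M - series b N).
Proof.
move=> leNM; rewrite /pfrac_sum.
rewrite (sum_ord_cat (fun n => (acoef n)%:C / ((al n)%:C - z)) leNM).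
rewrite addrAC subrr add0r sub_series_geq // mulr_sumr.
apply: le_trans (normc_sum _ _ _) (ler_sum _ _) => n _.
exact/normc_pfrac_term_le/ltW/acoef_gt0.
Qed.

Lemma cvg_pfrac_sum : cvgn (pfrac_sum z).
Proof.
apply: cvgC_cauchy => e e_gt0.
have close m n : (n <= m)%N -> `|series b m - series b n| < e / c ->
    normc (pfrac_sum z m - pfrac_sum z n) < e.
  move=> le_nm b_close; apply: le_lt_trans (normc_pfrac_sumB le_nm) _.
  by rewrite mulrC -ltr_pdivlMr //; apply: le_lt_trans (ler_norm _) b_close.
have := (cauchy_ballP _).2 (cvg_cauchy _ cvg_series_acoef) _ (divr_gt0 e_gt0 c_gt0).
rewrite near_map2 => /(_ _ _); apply: filterS => -[m n] /=.
rewrite /ball /=; case: (leqP n m) => [le_nm | /ltnW le_mn]; first exact: close.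
by rewrite -normcN opprB distrC; apply: close.
Qed.

Lemma pfrac_sum_tail_le N :
  normc (limn (pfrac_sum z) - pfrac_sum z N) <= c * (limn (series b) - series b N).
Proof.
apply/ler_addgt0Pr => e e_gt0.
have [M0 _ near_lim] := (cvgC_normcP _ _).1 cvg_pfrac_sum e e_gt0.
have leNM : (N <= maxn M0 N)%N by rewrite leq_maxr.
rewrite -(subrKA (pfrac_sum z (maxn M0 N))) addrC.
apply: le_trans (le_normcD _ _) (lerD _ (ltW (near_lim _ (leq_maxl _ _)))).
apply: le_trans (normc_pfrac_sumB leNM) _.
by rewrite ler_pM2l // lerD2r series_acoef_le_lim.
Qed.

Lemma cvg_pfrac_prod :
  (fun N => \prod_(k < N) ((z - (be k)%:C) / (z - (al k)%:C))) @ \oo -->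
  1 - limn (pfrac_sum z).
Proof.
have z_neq_al k : z != (al k)%:C.
  apply/eqP => z_eq; have := dist_ge k.
  by rewrite z_eq subrr ComplexField.Normc.normc0 leNgt d_gt0.
have prodE N : \prod_(k < N) ((z - (be k)%:C) / (z - (al k)%:C)) =
    1 - \sum_(n < N) (pfrac_coef al be n N)%:C / ((al n)%:C - z).
  rewrite (@prod_pfrac _ (fun k => (al k)%:C) (fun k => (be k)%:C))
    => [|i j /complexI/al_inj //|k _ //].
  by under eq_bigr do rewrite pfrac_coef_map.
apply/cvgC_normcP => e e_gt0; have e2_gt0 : 0 < e / 2 by rewrite divr_gt0.
have near_sum := (cvgC_normcP _ _).1 cvg_pfrac_sum _ e2_gt0.
have near_defect : \forall N \near \oo,
    c * \sum_(n < N) (acoef n - pfrac_coef al be n N) / al n < e / 2.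
  apply: filterS
    ((cvgrPdist_lt _ _).1 pfrac_defect_cvg0 _ (divr_gt0 e2_gt0 c_gt0)) => N.
  by rewrite sub0r normrN => /(le_lt_trans (ler_norm _)); rewrite ltr_pdivlMr // mulrC.
near=> N; rewrite prodE.
set T := \sum_(n < N) _; set L := limn (pfrac_sum z).
have -> : 1 - L - (1 - T) = (T - pfrac_sum z N) - (L - pfrac_sum z N) by ring.
apply: le_lt_trans (le_normcD _ _) _.
rewrite normcN (splitr e) ltrD //; last by near: N.
rewrite /T /pfrac_sum -sumrB -normcN -sumrN; apply: le_lt_trans (normc_sum _ _ _) _.
apply: le_lt_trans
  (_ : _ <= c * \sum_(n < N) (acoef n - pfrac_coef al be n N) / al n) _.
  rewrite mulr_sumr; apply: ler_sum => n _; rewrite opprB -mulrBl -rmorphB.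
  by rewrite normc_pfrac_term_le // subr_ge0 pfrac_coef_le_acoef.
by near: N.
Unshelve. all: by end_near. Qed.
End AwayFromSpectrum.
End Interlacing.

Section SpectrumDistance.
Variables (R : realType) (al : nat -> R).
Hypothesis al_cvg0 : al @ \oo --> 0.

Lemma dist_spectrum_gt0 (z : R[i]) : z != 0 -> (forall k, z != (al k)%:C) ->
  exists2 d, 0 < d & forall n, d <= normc ((al n)%:C - z).
Proof.
move=> z_neq0 z_neq_al.
have dist_gt0 n : 0 < normc ((al n)%:C - z) by rewrite normc_gt0 // subr_eq0 eq_sym.
have head M : exists2 d, 0 < d & forall n, (n < M)%N -> d <= normc ((al n)%:C - z).
  elim: M => [|M [d d_gt0 le_d]]; first by exists 1.
  exists (Num.min d (normc ((al M)%:C - z))) => [|n].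
    by rewrite lt_min d_gt0 dist_gt0.
  rewrite ltnS leq_eqVlt => /orP[/eqP-> | /le_d]; first by rewrite ge_min lexx orbT.
  by rewrite ge_min => ->.
have z2_gt0 : 0 < normc z / 2 by rewrite divr_gt0 ?normc_gt0.
have [N0 _ al_small] := (cvgrPdist_lt _ _).1 al_cvg0 _ z2_gt0.
have [d d_gt0 le_d] := head N0.
exists (Num.min d (normc z / 2)) => [|n]; first by rewrite lt_min d_gt0 z2_gt0.
rewrite ge_min; case: (ltnP n N0) => [/le_d -> // | /al_small /= al_lt].
rewrite sub0r normrN in al_lt; apply/orP; right.
have := le_normcD ((al n)%:C - z) (- (al n)%:C).
rewrite addrAC subrr add0r !normcN normc_real; lra.
Qed.

Lemma compact_dist_spectrum_gt0 (K : set R[i]) : compact K ->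
  (forall z, K z -> z != 0 /\ forall k, z != (al k)%:C) ->
  exists2 d, 0 < d & forall z, K z -> forall n, d <= normc ((al n)%:C - z).
Proof.
move=> K_cpt K_away.
pose P (i : nat) z := forall n, i.+1%:R^-1 <= normc ((al n)%:C - z).
have P_near z : K z -> \forall y \near z & i \near \oo, P i y.
  case/K_away => z_neq0 /(dist_spectrum_gt0 z_neq0) [d d_gt0 le_d].
  have d2_gt0 : 0 < d / 2 by rewrite divr_gt0.
  exists (ball z (d / 2)%:C, [set i : nat | i.+1%:R^-1 < d / 2]).
    split; first by apply: nbhsx_ballx; rewrite ltcR.
    exact: near_infty_natSinv_lt (PosNum d2_gt0).
  case=> y i /= [+ i_small] n; rewrite /ball /= normr_normc ltcR => z_y.
  have := le_normcD ((al n)%:C - y) (y - z).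
  rewrite subrKA -[normc (y - z)]normcN opprB => tri.
  apply/ltW/(lt_le_trans i_small); have := le_d n; lra.
have [N _ PN] := (compact_near_coveringP K).1 K_cpt nat \oo P _ P_near.
by exists N.+1%:R^-1 => [|z Kz]; [rewrite invr_gt0 | exact: PN N (leqnn N) z Kz].
Qed.

End SpectrumDistance.

Lemma sqr_interlacing (R : realType) (lam mu : nat -> R) :
    (forall k, mu k != 0) -> (forall k, `|mu k| < `|lam k|) ->
    (forall k, `|lam k.+1| < `|mu k|) ->
  [/\ forall k, 0 < mu k ^+ 2, forall k, mu k ^+ 2 < lam k ^+ 2
     & forall k, lam k.+1 ^+ 2 < mu k ^+ 2].
Proof.
move=> mu_neq0 mu_lt lam_lt.
have sqr_lt (x y : R) : `|x| < `|y| -> x ^+ 2 < y ^+ 2.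
  by rewrite -(real_normK (num_real x)) -(real_normK (num_real y)) ltr_sqr ?nnegrE.
by split=> k; [rewrite lt_def sqr_ge0 sqrf_eq0 mu_neq0 | exact: sqr_lt | exact: sqr_lt].
Qed.

Theorem lemma4p7 (R : realType) (lam mu : nat -> R)
  (hlam0 : forall k, lam k != 0) (hmu0 : forall k, mu k != 0)
  (hlm : forall k, `|mu k| < `|lam k|)
  (hml : forall k, `|lam k.+1| < `|mu k|)
  (hlim : lam @ \oo --> 0) :
  (forall n, cvg (a_partial lam mu n @ \oo)) /\
  (forall z : R[i], ~ sigma_set lam z ->
     cvg (Phi_partial lam mu z @ \oo) /\
     S_partial lam mu z @ \oo --> 1 - Phi lam mu z) /\
  (forall K : set R[i], compact K -> K `<=` ~` sigma_set lam ->
     forall e : R, 0 < e ->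
       \forall N \near \oo, forall z, K z ->
         `|S_partial lam mu z N - (1 - Phi lam mu z)| < e%:C).
Proof.
pose al k := lam k ^+ 2; pose be k := mu k ^+ 2.
have [be_gt0 be_lt_al al_lt_be] :
    [/\ forall k, 0 < be k, forall k, be k < al k & forall k, al k.+1 < be k].
  exact: sqr_interlacing.
have al_cvg0 : al @ \oo --> 0 by rewrite -(mulr0 0); apply: cvgM.
have away z : ~ sigma_set lam z -> z != 0 /\ forall k, z != (al k)%:C.
  move=> z_nsig; split; [|move=> k]; apply/eqP => z_eq; apply: z_nsig.
    by left.
  by right; exists k.
have PhiE z d : 0 < d -> (forall n, d <= normc ((al n)%:C - z)) ->
    1 - Phi lam mu z = limn (pfrac_sum al be z).
  move=> d_gt0 le_d; have := cvg_pfrac_prod be_gt0 be_lt_al al_lt_be d_gt0 le_d.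
  move/(cvg_lim (@norm_hausdorff _ (R[i]^o))); rewrite /Phi => ->.
  by rewrite opprB addrC subrK.
split=> [n|]; first exact: (cvg_pfrac_coef be_gt0 be_lt_al al_lt_be (n := n)).
split=> [z /away[z_neq0 z_neq_al] | K K_cpt K_away e e_gt0].
  have [d d_gt0 le_d] := dist_spectrum_gt0 al_cvg0 z_neq0 z_neq_al.
  split; first exact: cvgP (cvg_pfrac_prod be_gt0 be_lt_al al_lt_be d_gt0 le_d).
  by rewrite (PhiE z d) //; exact: (cvg_pfrac_sum be_gt0 be_lt_al al_lt_be d_gt0 le_d).
have [d d_gt0 le_d] :=
  compact_dist_spectrum_gt0 al_cvg0 K_cpt (fun z Kz => away z (K_away z Kz)).
have c_gt0 : 0 < al 0 / d by rewrite divr_gt0 ?(al_gt0 be_gt0 be_lt_al).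
apply: filterS ((cvgrPdist_lt _ _).1 (cvg_series_acoef be_gt0 be_lt_al al_lt_be) _
  (divr_gt0 e_gt0 c_gt0)) => N tail_small z Kz.
rewrite (PhiE z d d_gt0 (le_d z Kz)) normr_normc ltcR -normcN opprB.
apply: le_lt_trans (pfrac_sum_tail_le be_gt0 be_lt_al al_lt_be d_gt0 (le_d z Kz) N) _.
by rewrite mulrC -ltr_pdivlMr //; apply: le_lt_trans (ler_norm _) tail_small.
Qed.
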